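(* (1) If $\Gamma,\Delta\subseteq\mathcal{L}$ (the $\Box\!\!\rightarrow$-free fragment) satisfy $\Gamma\models_{\mathsf{N4}}\Delta$, and $\Gamma',\Delta'\subseteq\mathcal{L}_{\Box\!\!\rightarrow}$ are obtained from $\Gamma,\Delta$ by a simultaneous substitution of $\mathcal{L}_{\Box\!\!\rightarrow}$-formulas for variables, then $\Gamma'\vdash\Delta'$. Moreover, the Deduction Theorem holds for $\mathbb{N}4\mathbb{CK}$: for all $\Gamma\cup\{\phi,\psi\}\subseteq\mathcal{L}_{\Box\!\!\rightarrow}$, $\Gamma\vdash\phi\to\psi$ iff $\Gamma\cup\{\phi\}\vdash\psi$. (2) For $\phi\in\mathcal{L}$, $\vdash\phi$ iff $\phi\in\mathsf{N4}$.
   Context: $\mathcal{L}_{\Box\!\!\rightarrow}$ is built from propositional variables with $\wedge,\vee,\to$, strong negation $\sim$, and a binary would-conditional $\Box\!\!\rightarrow$; $\phi\Diamond\!\!\rightarrow\psi$ abbreviates $\sim(\phi\Box\!\!\rightarrow\sim\psi)$; $\mathcal{L}$ is the $\Box\!\!\rightarrow$-free fragment. $\mathsf{N4}$ is Nelson's paraconsistent logic: models $(W,\leq,V^+,V^-)$ with $\leq$ a preorder and $V^\pm$ assigning upward-closed sets; $w\models^\pm p$ iff $w\in V^\pm(p)$; $\wedge$ verified iff both verified, falsified iff one falsified; $\vee$ dually; $\sim$ swaps verification and falsification; $w\models^+\psi\to\chi$ iff for all $v\geq w$, $v\models^+\psi$ implies $v\models^+\chi$; $w\models^-\psi\to\chi$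 iff $w\models^+\psi$ and $w\models^-\chi$; $\Gamma\models_{\mathsf{N4}}\Delta$ iff no point verifies all of $\Gamma$ and no member of $\Delta$. Abbreviations: $\phi\leftrightarrow\psi:=(\phi\to\psi)\wedge(\psi\to\phi)$, $\phi\Rightarrow\psi:=(\phi\to\psi)\wedge(\sim\psi\to\sim\phi)$, $\phi\Leftrightarrow\psi:=(\phi\Rightarrow\psi)\wedge(\psi\Rightarrow\phi)$. $\mathbb{N}4\mathbb{CK}$ is the Hilbert system with modus ponens and axioms: the schemes of positive intuitionistic propositional logic; $\sim\sim\phi\leftrightarrow\phi$, $\sim(\phi\wedge\psi)\leftrightarrow(\sim\phi\vee\sim\psi)$, $\sim(\phi\vee\psi)\leftrightarrow(\sim\phi\wedge\sim\psi)$, $\sim(\phi\to\psi)\leftrightarrow(\phi\wedge\sim\psi)$; (A1) $((\phi\Box\!\!\rightarrow\psi)\wedge(\phi\Box\!\!\rightarrow\chi))\Leftrightarrow(\phi\Box\!\!\rightarrow(\psi\wedge\chi))$; (A2) $(\sim(\phi\Box\!\!\rightarrow\psi)\wedge(\phi\Box\!\!\rightarrow\chi))\to\sim(\phi\Box\!\!\rightarrow(\psi\vee\sim\chi))$; (A3) $((\phi\Diamond\!\!\rightarrow\psi)\to(\phi\Box\!\!\rightarrow\chi))\to(\phi\Box\!\!\rightarrow(\psi\to\chi))$; (A4) $\phi\Box\!\!\rightarrow(\psi\to\psi)$; and rules: from $\phi\Leftrightarrow\psi$ infer $(\phi\Box\!\!\rightarrow\chi)\Leftrightarrow(\psi\Box\!\!\rightarrow\chi)$;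 from $\phi\leftrightarrow\psi$ infer $(\chi\Box\!\!\rightarrow\phi)\leftrightarrow(\chi\Box\!\!\rightarrow\psi)$; from $\sim\phi\leftrightarrow\sim\psi$ infer $\sim(\chi\Box\!\!\rightarrow\phi)\leftrightarrow\sim(\chi\Box\!\!\rightarrow\psi)$. $\vdash\phi$ means $\phi$ is provable; $\Gamma\vdash\Delta$ means that for some $\theta_1,\ldots,\theta_s\in\Delta$ ($s\geq 1$), $\theta_1\vee\dots\vee\theta_s$ is derivable from members of $\Gamma$ and provable formulas by modus ponens only. *)

From Stdlib Require Import List.
Import ListNotations.

Inductive form : Type :=
| Var : nat -> form
| And : form -> form -> form
| Or  : form -> form -> form
| Imp : form -> form -> form
| Neg : form -> form            (* strong negation ~ *)
| Box : form -> form -> form.   (* would-conditional  phi []-> psi *)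

Fixpoint box_free (f : form) : Prop :=
  match f with
  | Var _ => True
  | And a b | Or a b | Imp a b => box_free a /\ box_free b
  | Neg a => box_free a
  | Box _ _ => False
  end.

Definition Dia (a b : form) : form := Neg (Box a (Neg b)).
Definition Iff (a b : form) : form := And (Imp a b) (Imp b a).
Definition SImp (a b : form) : form := And (Imp a b) (Imp (Neg b) (Neg a)).
Definition SIff (a b : form) : form := And (SImp a b) (SImp b a).

Fixpoint subst (s : nat -> form) (f : form) : form :=
  match f with
  | Var p => s p
  | And a b => And (subst s a) (subst s b)
  | Or a b => Or (subst s a) (subst s b)
  | Imp a b => Imp (subst s a) (subst s b)
  | Neg a => Neg (subst s a)
  | Box a b => Box (subst s a) (subst s b)
  end.

Record N4model : Type := {
  W : Type;
  le : W -> W -> Prop;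
  le_refl : forall w, le w w;
  le_trans : forall u v w, le u v -> le v w -> le u w;
  Vp : nat -> W -> Prop;
  Vn : nat -> W -> Prop;
  Vp_up : forall p w v, le w v -> Vp p w -> Vp p v;
  Vn_up : forall p w v, le w v -> Vn p w -> Vn p v
}.

(* forces M true w f : w verifies f ; forces M false w f : w falsifies f.
   The Box clause is irrelevant: semantics is only used on box-free formulas. *)
Fixpoint forces (M : N4model) (pos : bool) (w : W M) (f : form) : Prop :=
  match f with
  | Var p => if pos then Vp M p w else Vn M p w
  | And a b => if pos then forces M true w a /\ forces M true w b
               else forces M false w a \/ forces M false w b
  | Or a b => if pos then forces M true w a \/ forces M true w b
              else forces M false w a /\ forces M false w b
  | Neg a => forces M (negb pos) w a
  | Imp a b => if pos then (forall v, le M w v -> forces M true v a -> forces M true v b)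
               else forces M true w a /\ forces M false w b
  | Box _ _ => False
  end.

Definition N4_conseq (G D : form -> Prop) : Prop :=
  forall (M : N4model) (w : W M),
    (forall g, G g -> forces M true w g) -> exists d, D d /\ forces M true w d.

Definition N4_valid (f : form) : Prop :=
  forall (M : N4model) (w : W M), forces M true w f.

Inductive Prf : form -> Prop :=
| ax_K  : forall a b, Prf (Imp a (Imp b a))
| ax_S  : forall a b c, Prf (Imp (Imp a (Imp b c)) (Imp (Imp a b) (Imp a c)))
| ax_A1 : forall a b, Prf (Imp (And a b) a)
| ax_A2 : forall a b, Prf (Imp (And a b) b)
| ax_A3 : forall a b, Prf (Imp a (Imp b (And a b)))
| ax_O1 : forall a b, Prf (Imp a (Or a b))
| ax_O2 : forall a b, Prf (Imp b (Or a b))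
| ax_O3 : forall a b c, Prf (Imp (Imp a c) (Imp (Imp b c) (Imp (Or a b) c)))
| ax_NN  : forall a, Prf (Iff (Neg (Neg a)) a)
| ax_NA  : forall a b, Prf (Iff (Neg (And a b)) (Or (Neg a) (Neg b)))
| ax_NO  : forall a b, Prf (Iff (Neg (Or a b)) (And (Neg a) (Neg b)))
| ax_NI  : forall a b, Prf (Iff (Neg (Imp a b)) (And a (Neg b)))
| ax_C1 : forall a b c, Prf (SIff (And (Box a b) (Box a c)) (Box a (And b c)))
| ax_C2 : forall a b c, Prf (Imp (And (Neg (Box a b)) (Box a c)) (Neg (Box a (Or b (Neg c)))))
| ax_C3 : forall a b c, Prf (Imp (Imp (Dia a b) (Box a c)) (Box a (Imp b c)))
| ax_C4 : forall a b, Prf (Box a (Imp b b))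
| r_MP : forall a b, Prf (Imp a b) -> Prf a -> Prf b
| r_RA : forall a b c, Prf (SIff a b) -> Prf (SIff (Box a c) (Box b c))
| r_RC : forall a b c, Prf (Iff a b) -> Prf (Iff (Box c a) (Box c b))
| r_RCN : forall a b c, Prf (Iff (Neg a) (Neg b)) -> Prf (Iff (Neg (Box c a)) (Neg (Box c b))).

Inductive Deriv (G : form -> Prop) : form -> Prop :=
| d_hyp : forall a, G a -> Deriv G a
| d_thm : forall a, Prf a -> Deriv G a
| d_mp  : forall a b, Deriv G (Imp a b) -> Deriv G a -> Deriv G b.

Fixpoint bigOr (t : form) (ts : list form) : form :=
  match ts with
  | [] => t
  | t' :: ts' => Or t (bigOr t' ts')
  end.

Definition seq_derives (G D : form -> Prop) : Prop :=
  exists (t : form) (ts : list form),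
    D t /\ (forall x, In x ts -> D x) /\ Deriv G (bigOr t ts).

Definition img (s : nat -> form) (G : form -> Prop) : form -> Prop :=
  fun f => exists g, G g /\ f = subst s g.

Definition add (G : form -> Prop) (a : form) : form -> Prop :=
  fun f => G f \/ f = a.

Definition single (a : form) : form -> Prop := fun f => f = a.

From Stdlib Require Import List Classical Cantor Lia.
Import ListNotations.

(* Soundness: reading every conditional [a []-> b] as its consequent [b]
   turns each axiom and rule of N4CK into an N4-valid one, and on the
   []->-free fragment this reading is the identity.
   Completeness is by a canonical model whose points are prime theories of
   N4CK: a set that does not derive Delta extends, along an enumeration of the
   formulas, to a prime theory that still does not derive Delta.  Since
   derivability is closed under substitution, completeness for box-free
   sequents also yields the substitution instances.  The deduction theorem
   holds because hypotheses are used by modus ponens only, the conditional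
   rules acting on theorems alone. *)

Lemma Prf_imp_refl a : Prf (Imp a a).
Proof.
  exact (r_MP _ _ (r_MP _ _ (ax_S a (Imp a a) a) (ax_K a (Imp a a))) (ax_K a a)).
Qed.

Lemma Prf_imp_trans a b c : Prf (Imp a b) -> Prf (Imp b c) -> Prf (Imp a c).
Proof.
  intros Hab Hbc.
  exact (r_MP _ _ (r_MP _ _ (ax_S a b c) (r_MP _ _ (ax_K _ a) Hbc)) Hab).
Qed.

Lemma Prf_or_elim a b c : Prf (Imp a c) -> Prf (Imp b c) -> Prf (Imp (Or a b) c).
Proof. intros Hac Hbc. exact (r_MP _ _ (r_MP _ _ (ax_O3 a b c) Hac) Hbc). Qed.

Lemma Prf_subst s a : Prf a -> Prf (subst s a).
Proof. induction 1; simpl; try (econstructor; eassumption); constructor. Qed.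

Lemma Deriv_mono G G' a : (forall x, G x -> G' x) -> Deriv G a -> Deriv G' a.
Proof. intros HG; induction 1; [apply d_hyp, HG | apply d_thm | eapply d_mp]; eauto. Qed.

Lemma Deriv_add_l G a b : Deriv G b -> Deriv (add G a) b.
Proof. apply Deriv_mono; now left. Qed.

Lemma Deriv_add_r G a : Deriv (add G a) a.
Proof. now apply d_hyp; right. Qed.

Lemma Deriv_deduction G a b : Deriv (add G a) b -> Deriv G (Imp a b).
Proof.
  induction 1 as [x [Hx | ->] | x Hx | x y _ IHxy _ IHx].
  - exact (d_mp _ _ _ (d_thm _ _ (ax_K x a)) (d_hyp _ _ Hx)).
  - apply d_thm, Prf_imp_refl.
  - exact (d_mp _ _ _ (d_thm _ _ (ax_K x a)) (d_thm _ _ Hx)).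
  - exact (d_mp _ _ _ (d_mp _ _ _ (d_thm _ _ (ax_S a x y)) IHxy) IHx).
Qed.

Lemma Deriv_imp_iff G a b : Deriv G (Imp a b) <-> Deriv (add G a) b.
Proof.
  split; [|apply Deriv_deduction].
  intro H; exact (d_mp _ _ _ (Deriv_add_l _ _ _ H) (Deriv_add_r G a)).
Qed.

Lemma Deriv_cut G a b : Deriv (add G a) b -> Deriv G a -> Deriv G b.
Proof. intros Hb Ha; exact (d_mp _ _ _ (Deriv_deduction _ _ _ Hb) Ha). Qed.

Lemma Deriv_subst s G a : Deriv G a -> Deriv (img s G) (subst s a).
Proof.
  induction 1; [apply d_hyp; eexists; eauto | apply d_thm, Prf_subst | eapply d_mp]; eauto.
Qed.

Lemma Prf_of_Deriv_empty a : Deriv (fun _ => False) a -> Prf a.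
Proof. induction 1; [contradiction | assumption | eapply r_MP; eassumption]. Qed.

Lemma bigOr_const x ts : (forall y, In y ts -> y = x) -> Prf (Imp (bigOr x ts) x).
Proof.
  revert x; induction ts as [|t ts IH]; intros x Hts; simpl.
  - apply Prf_imp_refl.
  - apply Prf_or_elim; [apply Prf_imp_refl|].
    rewrite (Hts t (or_introl eq_refl)) in *.
    apply IH; intros y Hy; apply Hts; now right.
Qed.

Lemma bigOr_app_l t ts u us : Prf (Imp (bigOr t ts) (bigOr t (ts ++ u :: us))).
Proof.
  revert t; induction ts as [|t' ts IH]; intro t; simpl.
  - apply ax_O1.
  - apply Prf_or_elim; [apply ax_O1 | eapply Prf_imp_trans; [apply IH | apply ax_O2]].
Qed.

Lemma bigOr_app_r t ts u us : Prf (Imp (bigOr u us) (bigOr t (ts ++ u :: us))).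
Proof.
  revert t; induction ts as [|t' ts IH]; intro t; simpl.
  - apply ax_O2.
  - eapply Prf_imp_trans; [apply IH | apply ax_O2].
Qed.

Lemma bigOr_subst s t ts : subst s (bigOr t ts) = bigOr (subst s t) (map (subst s) ts).
Proof. revert t; induction ts as [|t' ts IH]; intro t; simpl; congruence. Qed.

Lemma seq_derives_mono G G' D :
  (forall x, G x -> G' x) -> seq_derives G D -> seq_derives G' D.
Proof.
  intros HG (t & ts & Ht & Hts & H); exists t, ts; eauto using Deriv_mono.
Qed.

Lemma seq_derives_single G a : seq_derives G (single a) <-> Deriv G a.
Proof.
  split.
  - intros (t & ts & -> & Hts & H).
    exact (d_mp _ _ _ (d_thm _ _ (bigOr_const a ts Hts)) H).
  - intro H; exists a, []; repeat split; simpl; tauto.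
Qed.

Lemma seq_derives_cut G D a : seq_derives (add G a) D -> Deriv G a -> seq_derives G D.
Proof.
  intros (t & ts & Ht & Hts & H) Ha; exists t, ts; eauto using Deriv_cut.
Qed.

Lemma seq_derives_or_cases G D a b :
  G (Or a b) -> seq_derives (add G a) D -> seq_derives (add G b) D -> seq_derives G D.
Proof.
  intros Hab (t & ts & Ht & Hts & Ha) (u & us & Hu & Hus & Hb).
  exists t, (ts ++ u :: us); split; [exact Ht | split].
  - intros x Hx; apply in_app_or in Hx as [Hx | [<- | Hx]]; auto.
  - set (c := bigOr t (ts ++ u :: us)).
    assert (Hac : Deriv G (Imp a c))
      by exact (Deriv_deduction _ _ _ (d_mp _ _ _ (d_thm _ _ (bigOr_app_l t ts u us)) Ha)).
    assert (Hbc : Deriv G (Imp b c))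
      by exact (Deriv_deduction _ _ _ (d_mp _ _ _ (d_thm _ _ (bigOr_app_r t ts u us)) Hb)).
    exact (d_mp _ _ _ (d_mp _ _ _ (d_mp _ _ _ (d_thm _ _ (ax_O3 a b c)) Hac) Hbc) (d_hyp _ _ Hab)).
Qed.

Lemma seq_derives_subst s G D : seq_derives G D -> seq_derives (img s G) (img s D).
Proof.
  intros (t & ts & Ht & Hts & H); exists (subst s t), (map (subst s) ts); split; [|split].
  - now exists t.
  - intros x Hx; apply in_map_iff in Hx as (y & <- & Hy); exists y; split; auto.
  - rewrite <- bigOr_subst; now apply Deriv_subst.
Qed.

Section Lindenbaum.

Variable code : form -> nat.
Hypothesis code_inj : forall f g, code f = code g -> f = g.
Variables G D : form -> Prop.

Fixpoint stage (n : nat) : form -> Prop :=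
  match n with
  | 0 => G
  | S n => fun x => stage n x \/ (code x = n /\ ~ seq_derives (add (stage n) x) D)
  end.

Definition limit (x : form) : Prop := exists n, stage n x.

Lemma stage_mono n m x : n <= m -> stage n x -> stage m x.
Proof. induction 1; simpl; auto. Qed.

Lemma Deriv_limit_stage x : Deriv limit x -> exists n, Deriv (stage n) x.
Proof.
  induction 1 as [x [n Hx] | x Hx | x y _ [n Hxy] _ [m Hx]].
  - exists n; now apply d_hyp.
  - exists 0; now apply d_thm.
  - exists (max n m); apply d_mp with x; eapply Deriv_mono; try eassumption;
      intros z; apply stage_mono; lia.
Qed.

Lemma limit_excluded x : ~ limit x -> seq_derives (add limit x) D.
Proof.
  intro Hx; apply NNPP; intro Hcons; apply Hx; exists (S (code x)); right; split; auto.
  contradict Hcons; eapply seq_derives_mono; [|exact Hcons].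
  intros y [Hy | ->]; [left; now exists (code x) | now right].
Qed.

Hypothesis G_consistent : ~ seq_derives G D.

Lemma stage_consistent n : ~ seq_derives (stage n) D.
Proof.
  induction n as [|n IH]; [exact G_consistent|]; simpl; intro Hder.
  destruct (classic (exists f, code f = n /\ ~ seq_derives (add (stage n) f) D))
    as [(f & Hf & Hcons) | Hnone].
  - apply Hcons; eapply seq_derives_mono; [|exact Hder].
    intros x [Hx | [Hx _]]; [now left | right; apply code_inj; congruence].
  - apply IH; eapply seq_derives_mono; [|exact Hder].
    intros x [Hx | Hx]; [exact Hx | exfalso; apply Hnone; now exists x].
Qed.

Lemma limit_consistent : ~ seq_derives limit D.
Proof.
  intros (t & ts & Ht & Hts & H); apply Deriv_limit_stage in H as [n H].
  apply (stage_consistent n); now exists t, ts.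
Qed.

Lemma limit_closed f : Deriv limit f -> limit f.
Proof.
  intro Hf; apply NNPP; intro Hnot; apply limit_consistent.
  exact (seq_derives_cut _ _ _ (limit_excluded f Hnot) Hf).
Qed.

Lemma limit_prime a b : limit (Or a b) -> limit a \/ limit b.
Proof.
  intro Hab; apply NNPP; intros Hnot; apply limit_consistent.
  apply (seq_derives_or_cases _ _ a b Hab); apply limit_excluded; tauto.
Qed.

End Lindenbaum.

Fixpoint form_code (f : form) : nat :=
  match f with
  | Var p => to_nat (0, p)
  | And a b => to_nat (1, to_nat (form_code a, form_code b))
  | Or a b => to_nat (2, to_nat (form_code a, form_code b))
  | Imp a b => to_nat (3, to_nat (form_code a, form_code b))
  | Neg a => to_nat (4, form_code a)
  | Box a b => to_nat (5, to_nat (form_code a, form_code b))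
  end.

Lemma to_nat_inj p q : to_nat p = to_nat q -> p = q.
Proof. intro H. now rewrite <- (cancel_of_to p), <- (cancel_of_to q), H. Qed.

Lemma form_code_inj f g : form_code f = form_code g -> f = g.
Proof.
  revert g; induction f; intros [] H; cbn [form_code] in H;
    repeat match goal with
           | H : to_nat _ = to_nat _ |- _ => apply to_nat_inj, pair_equal_spec in H as [? H]
           end;
    try discriminate; f_equal; auto.
Qed.

Record prime_theory : Type := {
  pt_mem :> form -> Prop;
  pt_closed : forall f, Deriv pt_mem f -> pt_mem f;
  pt_prime : forall a b, pt_mem (Or a b) -> pt_mem a \/ pt_mem b
}.

Lemma lindenbaum G D : ~ seq_derives G D ->
  exists T : prime_theory, (forall g, G g -> T g) /\ ~ seq_derives T D.
Proof.
  intro HGD.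
  exists {| pt_mem := limit form_code G D;
            pt_closed := limit_closed form_code form_code_inj G D HGD;
            pt_prime := limit_prime form_code form_code_inj G D HGD |}; simpl.
  split; [intros g Hg; now exists 0 | exact (limit_consistent _ form_code_inj _ _ HGD)].
Qed.

Section PrimeTheory.

Variable T : prime_theory.

Lemma pt_mp a b : T a -> Prf (Imp a b) -> T b.
Proof. intros Ha Hab; apply pt_closed, (d_mp _ a); [apply d_thm | apply d_hyp]; assumption. Qed.

Lemma pt_iff a b : Prf (Iff a b) -> (T a <-> T b).
Proof.
  intro H; split; intro Hx; eapply pt_mp; eauto.
  - exact (r_MP _ _ (ax_A1 _ _) H).
  - exact (r_MP _ _ (ax_A2 _ _) H).
Qed.

Lemma pt_and a b : T (And a b) <-> T a /\ T b.
Proof.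
  split.
  - intro H; split; eapply pt_mp; eauto using ax_A1, ax_A2.
  - intros [Ha Hb]; apply pt_closed.
    exact (d_mp _ _ _ (d_mp _ _ _ (d_thm _ _ (ax_A3 a b)) (d_hyp _ _ Ha)) (d_hyp _ _ Hb)).
Qed.

Lemma pt_or a b : T (Or a b) <-> T a \/ T b.
Proof. split; [apply pt_prime | intros [H | H]; eapply pt_mp; eauto using ax_O1, ax_O2]. Qed.

Lemma pt_imp a b :
  T (Imp a b) <-> forall T' : prime_theory, (forall f, T f -> T' f) -> T' a -> T' b.
Proof.
  split.
  - intros Hab T' HT' Ha; apply pt_closed.
    exact (d_mp _ _ _ (d_hyp _ _ (HT' _ Hab)) (d_hyp _ _ Ha)).
  - intro Hext; apply NNPP; intro Hab.
    assert (Hcons : ~ seq_derives (add T a) (single b)).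
    { rewrite seq_derives_single, <- Deriv_imp_iff; contradict Hab; now apply pt_closed. }
    destruct (lindenbaum _ _ Hcons) as (T' & HTa & Hb).
    apply Hb, seq_derives_single, d_hyp, Hext.
    + intros f Hf; apply HTa; now left.
    + apply HTa; now right.
Qed.

End PrimeTheory.

Definition canonical_model : N4model := {|
  W := prime_theory;
  le := fun T T' => forall f, T f -> T' f;
  le_refl := fun T f H => H;
  le_trans := fun T1 T2 T3 H12 H23 f H => H23 f (H12 f H);
  Vp := fun p T => T (Var p);
  Vn := fun p T => T (Neg (Var p));
  Vp_up := fun p T T' H H' => H _ H';
  Vn_up := fun p T T' H H' => H _ H'
|}.

Lemma canonical_truth f : box_free f -> forall T : prime_theory,
  (forces canonical_model true T f <-> T f) /\
  (forces canonical_model false T f <-> T (Neg f)).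
Proof.
  induction f as [p | a IHa b IHb | a IHa b IHb | a IHa b IHb | a IHa | a IHa b IHb];
    simpl; intros Hbf T.
  - tauto.
  - destruct Hbf; rewrite (pt_iff T _ _ (ax_NA a b)), pt_and, pt_or; firstorder.
  - destruct Hbf; rewrite (pt_iff T _ _ (ax_NO a b)), pt_or, pt_and; firstorder.
  - destruct Hbf; rewrite (pt_iff T _ _ (ax_NI a b)), pt_and, pt_imp; firstorder.
  - rewrite (pt_iff T _ _ (ax_NN a)); firstorder.
  - contradiction.
Qed.

Lemma N4_complete G D :
  (forall g, G g -> box_free g) -> (forall d, D d -> box_free d) ->
  N4_conseq G D -> seq_derives G D.
Proof.
  intros HG HD Hconseq; apply NNPP; intro HGD.
  destruct (lindenbaum _ _ HGD) as (T & HGT & HTD).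
  destruct (Hconseq canonical_model T) as (d & Hd & HTd).
  - intros g Hg; apply canonical_truth; auto.
  - apply HTD; exists d, []; repeat split; simpl; try tauto.
    apply d_hyp, (canonical_truth d (HD d Hd)), HTd.
Qed.

Fixpoint erase (f : form) : form :=
  match f with
  | Var p => Var p
  | And a b => And (erase a) (erase b)
  | Or a b => Or (erase a) (erase b)
  | Imp a b => Imp (erase a) (erase b)
  | Neg a => Neg (erase a)
  | Box _ b => erase b
  end.

Lemma erase_box_free f : box_free f -> erase f = f.
Proof. induction f; simpl; intuition congruence. Qed.

Lemma forces_up (M : N4model) f :
  forall pos w v, le M w v -> forces M pos w f -> forces M pos v f.
Proof.
  induction f; intros [] w v Hwv; simpl; firstorder eauto using Vp_up, Vn_up, le_trans.
Qed.

Lemma Prf_erase_valid a : Prf a -> N4_valid (erase a).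
Proof.
  intros H M; induction H; intro w; simpl in *;
    firstorder eauto using forces_up, le_trans, le_refl.
Qed.

Theorem lemma2 :
  (forall (G D : form -> Prop) (s : nat -> form),
      (forall g, G g -> box_free g) ->
      (forall d, D d -> box_free d) ->
      N4_conseq G D ->
      seq_derives (img s G) (img s D))
  /\
  (forall (G : form -> Prop) (a b : form),
      seq_derives G (single (Imp a b)) <-> seq_derives (add G a) (single b))
  /\
  (forall a : form, box_free a -> (Prf a <-> N4_valid a)).
Proof.
  split; [|split].
  - intros G D s HG HD Hconseq; now apply seq_derives_subst, N4_complete.
  - intros G a b; now rewrite !seq_derives_single, Deriv_imp_iff.
  - intros a Ha; split.
    + intro H; rewrite <- (erase_box_free a Ha); exact (Prf_erase_valid a H).
    + intro Hvalid; apply Prf_of_Deriv_empty, seq_derives_single, N4_complete.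
      * contradiction.
      * intros d ->; exact Ha.
      * intros M w _; exists a; split; [reflexivity | apply Hvalid].
Qed.
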